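(* Let $(X,d,\mu)$ be a coarse median space in which rank at most $1$ is achieved under parameters $\rho,H$. Then for any $\zeta\geqslant0$, setting $\zeta'=2H(4)+\zeta$, for all $a,b,c\in X$, $$\mathcal N_\zeta([a,b])\subseteq\mathcal N_{\zeta'}([a,c])\cup\mathcal N_{\zeta'}([c,b]).$$
   Context: Write $x\sim_s y$ if $d(x,y)\leqslant s$. A coarse median space is a triple $(X,d,\mu)$ with $(X,d)$ a metric space and $\mu\colon X^3\to X$ satisfying: (M1) $\mu(a,a,b)=a$; (M2) $\mu(a_1,a_2,a_3)$ is invariant under permutations of its arguments; (C1) there is an affine $\rho(t)=Kt+H_0$ with $d(\mu(a,b,c),\mu(a',b',c'))\leqslant\rho(d(a,a')+d(b,b')+d(c,c'))$ for all points; (C2) there is $H\colon\mathbb N\to[0,\infty)$ such that for every finite $A\subseteq X$ with $1\leqslant|A|\leqslant p$ there are a finite median algebra $(\Pi,\mu_\Pi)$ and maps $\pi\colon A\to\Pi$, $\lambda\colon\Pi\to X$ with $\lambda\mu_\Pi(x,y,z)\sim_{H(p)}\mu(\lambda x,\lambda y,\lambda z)$ for all $x,y,z\in\Pi$ and $\lambda\pi a\sim_{H(p)}a$ for all $a\in A$. (A median algebra is a set with a ternary operation $m$ satisfying $m(a,a,b)=a$, full symmetry, and $m(m(a,b,c),b,d)=m(a,b,m(c,b,d))$; its rank is the supremum of $k$ such that it contains a subalgebra isomorphic to $(\mathbb Z_2)^k$ with coordinatewise majority vote.) ''Rank at most $n$ is achieved under parameters $\rho,H$'' means $\rho,H$ satisfy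 (C1),(C2) and for every finite $A$ as in (C2) one can choose $(\Pi,\pi,\lambda)$ as in (C2) with $\Pi$ of rank at most $n$ and $\lambda\circ\pi$ equal to the inclusion $A\hookrightarrow X$. The interval is $[a,b]=\{\mu(a,y,b):y\in X\}$, and $\mathcal N_\zeta(S)=\{y\in X:\exists s\in S,\ d(y,s)\leqslant\zeta\}$. *)

From Stdlib Require Import Reals List.
From mathcomp Require Import all_boot.
Set Implicit Arguments. Unset Strict Implicit. Unset Printing Implicit Defensive.

Local Open Scope R_scope.

Definition is_metric (X : Type) (d : X -> X -> R) : Prop :=
  (forall x y, d x y = 0 <-> x = y) /\
  (forall x y, d x y = d y x) /\
  (forall x y z, d x z <= d x y + d y z).

Definition near_s (X : Type) (d : X -> X -> R) (s : R) (x y : X) : Prop :=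
  d x y <= s.

Definition median_algebra (T : Type) (m : T -> T -> T -> T) : Prop :=
  (forall a b, m a a b = a) /\
  (forall a b c,
      m a b c = m a c b /\ m a b c = m b a c /\ m a b c = m b c a /\
      m a b c = m c a b /\ m a b c = m c b a) /\
  (forall a b c e, m (m a b c) b e = m a b (m c b e)).

Definition cube (k : nat) : finType := {ffun 'I_k -> bool}.
Definition majority (b1 b2 b3 : bool) : bool :=
  (b1 && b2) || (b2 && b3) || (b1 && b3).
Definition cube_median (k : nat) (x y z : cube k) : cube k :=
  [ffun i => majority (x i) (y i) (z i)].

(* P contains a median subalgebra isomorphic to (Z_2)^k: an injective
   median homomorphism from the cube (its image is then a subalgebra). *)
Definition has_cube (P : Type) (m : P -> P -> P -> P) (k : nat) : Prop :=
  exists f : cube k -> P,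
    injective f /\
    (forall x y z, f (cube_median x y z) = m (f x) (f y) (f z)).

Definition rank_le (P : Type) (m : P -> P -> P -> P) (n : nat) : Prop :=
  forall k : nat, has_cube m k -> (k <= n)%N.

Definition M1 (X : Type) (mu : X -> X -> X -> X) : Prop :=
  forall a b, mu a a b = a.
Definition M2 (X : Type) (mu : X -> X -> X -> X) : Prop :=
  forall a b c,
      mu a b c = mu a c b /\ mu a b c = mu b a c /\ mu a b c = mu b c a /\
      mu a b c = mu c a b /\ mu a b c = mu c b a.

(* (C1) with the affine function rho(t) = K t + H0 *)
Definition C1 (X : Type) (d : X -> X -> R) (mu : X -> X -> X -> X)
  (K H0 : R) : Prop :=
  forall a b c a' b' c',
    d (mu a b c) (mu a' b' c') <= K * (d a a' + d b b' + d c c') + H0.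

(* Approximating data for a finite set A (a duplicate-free list) with
   1 <= |A| <= p. [exact] requires lambda o pi = inclusion on A;
   [rk] optionally bounds the rank. *)
Definition approx_data (X : Type) (d : X -> X -> R) (mu : X -> X -> X -> X)
  (Hp : R) (A : list X) (rk : option nat) (exact : bool) : Prop :=
  exists (P : finType) (m : P -> P -> P -> P) (pi : X -> P) (lam : P -> X),
    median_algebra m /\
    (match rk with Some n => rank_le m n | None => True end) /\
    (forall x y z : P, near_s d Hp (lam (m x y z)) (mu (lam x) (lam y) (lam z))) /\
    (forall a, In a A -> near_s d Hp (lam (pi a)) a) /\
    (if exact then forall a, In a A -> lam (pi a) = a else True).

Definition C2 (X : Type) (d : X -> X -> R) (mu : X -> X -> X -> X)
  (H : nat -> R) : Prop :=
  (forall p, 0 <= H p) /\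
  forall (p : nat) (A : list X), NoDup A -> (1 <= length A)%nat ->
    (length A <= p)%nat -> approx_data d mu (H p) A None false.

Definition rank_achieved (X : Type) (d : X -> X -> R) (mu : X -> X -> X -> X)
  (n : nat) (K H0 : R) (H : nat -> R) : Prop :=
  C1 d mu K H0 /\ C2 d mu H /\
  forall (p : nat) (A : list X), NoDup A -> (1 <= length A)%nat ->
    (length A <= p)%nat -> approx_data d mu (H p) A (Some n) true.

Definition interval (X : Type) (mu : X -> X -> X -> X) (a b : X) : X -> Prop :=
  fun x => exists y, x = mu a y b.
Definition nbhd (X : Type) (d : X -> X -> R) (zeta : R) (S : X -> Prop) : X -> Prop :=
  fun y => exists s, S s /\ d y s <= zeta.

From Stdlib Require Import Reals List ClassicalEpsilon Lra.
From mathcomp Require Import all_boot.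

Set Implicit Arguments.
Unset Strict Implicit.

(* In a median algebra, a point p of [a,b] lies in [a,c] or in [c,b] unless
   p, u = m(a,p,c), m(u,c,v) and v = m(b,p,c) are the corners of a square,
   i.e. of a copy of (Z_2)^2.  Given y within zeta of mu(a,w,b), approximate
   {a,b,c,w} by a finite median algebra of rank at most 1 that is exact on
   these four points.  There the square cannot occur, so the model of
   mu(a,w,b) lies in the model's [a,c] or [c,b]; mapping back to X moves
   points by at most H(4) twice. *)

Section MedianAlgebra.

Variables (T : Type) (m : T -> T -> T -> T).
Hypothesis hm : median_algebra m.

Lemma median_majority a b : m a a b = a.
Proof. by case: hm. Qed.

Lemma median_assoc a b c e : m (m a b c) b e = m a b (m c b e).
Proof. by case: hm => _ []. Qed.

Lemma medianC12 a b c : m a b c = m b a c.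
Proof. by case: hm => _ [+ _] => /(_ a b c) [_ []]. Qed.

Lemma medianC23 a b c : m a b c = m a c b.
Proof. by case: hm => _ [+ _] => /(_ a b c) []. Qed.

Lemma medianC13 a b c : m a b c = m c b a.
Proof. by rewrite medianC12 medianC23 medianC12. Qed.

Lemma median_majority_mid a b : m a b a = a.
Proof. by rewrite medianC23 median_majority. Qed.

Lemma median_majority_last a b : m b a a = a.
Proof. by rewrite medianC13 median_majority. Qed.

Lemma median_interval_idem a x b : m a (m a x b) b = m a x b.
Proof.
by rewrite (medianC12 a x b) (medianC12 a (m x a b)) median_assoc median_majority_mid.
Qed.

Lemma median_perm_eq a b c r : m a b c = r ->
  [/\ m a c b = r, m b a c = r, m b c a = r, m c a b = r & m c b a = r].
Proof.
move=> <-; split.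
- by rewrite medianC23.
- by rewrite medianC12.
- by rewrite (medianC13 b) medianC23.
- by rewrite (medianC12 c) medianC23.
- by rewrite medianC13.
Qed.

(* p, u, w, v are the corners of the square in cyclic order. *)
Lemma square_has_cube2 p u w v :
  m u p v = p -> m p u w = u -> m u w v = w -> m w v p = v ->
  p <> u -> u <> w -> w <> v -> v <> p -> has_cube m 2.
Proof.
move=> Ep Eu Ew Ev Npu Nuw Nwv Nvp.
have Npw : p <> w by move=> e; apply: Npu; rewrite -Eu -e median_majority_mid.
have Nuv : u <> v by move=> e; apply: Npu; rewrite -Ep -e median_majority_mid.
have [Ep1 Ep2 Ep3 Ep4 Ep5] := median_perm_eq Ep.
have [Eu1 Eu2 Eu3 Eu4 Eu5] := median_perm_eq Eu.
have [Ew1 Ew2 Ew3 Ew4 Ew5] := median_perm_eq Ew.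
have [Ev1 Ev2 Ev3 Ev4 Ev5] := median_perm_eq Ev.
pose g (b0 b1 : bool) := match b0, b1 with
  | false, false => p | true, false => u | true, true => w | false, true => v end.
exists (fun z : cube 2 => g (z ord0) (z ord_max)); split.
- move=> z1 z2 /= e.
  have [e0 e1] : z1 ord0 = z2 ord0 /\ z1 ord_max = z2 ord_max.
    move: e; rewrite /g.
    by case: (z1 ord0); case: (z1 ord_max); case: (z2 ord0); case: (z2 ord_max);
      move=> // e; congruence.
  apply/ffunP => -[[|[|k]] Hk] //.
  + by have -> : Ordinal Hk = ord0 by apply: val_inj.
  + by have -> : Ordinal Hk = ord_max by apply: val_inj.
- move=> z1 z2 z3; rewrite !ffunE /g /majority.
  case: (z1 ord0); case: (z1 ord_max); case: (z2 ord0); case: (z2 ord_max);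
  case: (z3 ord0); case: (z3 ord_max) => /=;
  first [ by rewrite ?median_majority ?median_majority_mid ?median_majority_last
        | congruence ].
Qed.

Lemma median_interval_split a b c x (p := m a x b) :
  m a p c = p \/ m c p b = p \/ has_cube m 2.
Proof.
have hp : m a p b = p by rewrite /p median_interval_idem.
case: (excluded_middle_informative (m a p c = p)) => [|Nu]; first by left.
case: (excluded_middle_informative (m c p b = p)) => [|Nv]; first by right; left.
right; right.
set u := m a p c; set v := m b p c; set w := m u c v.
have {}Nu : u <> p by [].
have {}Nv : v <> p by rewrite /v medianC13.
have Ep : m u p v = p.
  rewrite /u /v median_assoc (medianC13 b p c) -(median_assoc c p c b).
  rewrite median_majority_mid (medianC13 c p b) -(median_assoc a p b c) hp.
  exact: median_majority.
have Eu : m p u w = u.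
  have Eu' : m p u c = u by rewrite /u (medianC12 a p c) median_interval_idem.
  by rewrite /w (medianC12 u c v) -(median_assoc p u c v) Eu' median_majority.
have Ew : m u w v = w by rewrite /w median_interval_idem.
have Ev : m w v p = v.
  have Ev' : m c v p = v.
    by rewrite /v (medianC12 b p c) (medianC13 c (m p b c) p) median_interval_idem.
  by rewrite /w (medianC23 u c v) (median_assoc u v c p) Ev' median_majority_last.
apply: (square_has_cube2 Ep Eu Ew Ev) => //.
- exact: not_eq_sym.
- by move=> e; apply: Nv; rewrite -{1}Ev -e -(medianC23 u p v) Ep.
- by move=> e; apply: Nu; rewrite -{1}Eu e (medianC12 p u v) Ep.
Qed.

End MedianAlgebra.

Lemma nodup_cover (T : Type) (l : list T) :
  exists l', [/\ NoDup l', incl l l' & (length l' <= length l)%nat].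
Proof.
pose decT (x y : T) := excluded_middle_informative (x = y).
exists (nodup decT l); split; first exact: NoDup_nodup.
- by move=> x; rewrite nodup_In.
- apply/leP; apply: NoDup_incl_length; first exact: NoDup_nodup.
  by move=> x; rewrite nodup_In.
Qed.

Local Open Scope R_scope.

Section CoarseMedian.

Variables (X : Type) (d : X -> X -> R) (mu : X -> X -> X -> X).
Hypothesis hd : is_metric d.

Lemma nbhd_triangle (r s : R) (S : X -> Prop) x y :
  nbhd d r S x -> d y x <= s -> nbhd d (r + s) S y.
Proof.
case: hd => _ [_ dtri] [z [Sz hxz]] hyx.
by exists z; split => //; have := dtri y x z; lra.
Qed.

Lemma exact_rank1_interval_split (Hp : R) (A : list X) a b c w :
  approx_data d mu Hp A (Some 1%nat) true ->
  In a A -> In b A -> In c A -> In w A ->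
  nbhd d (2 * Hp) (interval mu a c) (mu a w b) \/
  nbhd d (2 * Hp) (interval mu c b) (mu a w b).
Proof.
case: hd => _ [dsym dtri].
move=> [P [m [pi [lam [hm [hrk [hnear [_ hex]]]]]]]] Aa Ab Ac Aw.
set p := m (pi a) (pi w) (pi b).
have near_p : d (mu a w b) (lam p) <= Hp.
  by rewrite dsym; move: (hnear (pi a) (pi w) (pi b)); rewrite /near_s !hex.
have [e|[e|sq]] := median_interval_split hm (pi a) (pi b) (pi c) (pi w); last first.
- by have := hrk 2%nat sq.
- right; exists (mu c (lam p) b); split; first by exists (lam p).
  have : d (lam p) (mu c (lam p) b) <= Hp.
    by move: (hnear (pi c) p (pi b)); rewrite /near_s -/p e !hex.
  by have := dtri (mu a w b) (lam p) (mu c (lam p) b); lra.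
- left; exists (mu a (lam p) c); split; first by exists (lam p).
  have : d (lam p) (mu a (lam p) c) <= Hp.
    by move: (hnear (pi a) p (pi c)); rewrite /near_s -/p e !hex.
  by have := dtri (mu a w b) (lam p) (mu a (lam p) c); lra.
Qed.

End CoarseMedian.

Theorem lemma4p5 (X : Type) (d : X -> X -> R) (mu : X -> X -> X -> X)
  (K H0 : R) (H : nat -> R)
  (hd : is_metric d) (hM1 : M1 mu) (hM2 : M2 mu)
  (hrank : rank_achieved d mu 1 K H0 H)
  (zeta : R) (hzeta : 0 <= zeta) :
  let zeta' := 2 * H 4%nat + zeta in
  forall a b c y : X,
    nbhd d zeta (interval mu a b) y ->
    nbhd d zeta' (interval mu a c) y \/ nbhd d zeta' (interval mu c b) y.
Proof.
move=> zeta' a b c y [_ [[w ->] hy]].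
have [A [nodupA subA lenA]] := nodup_cover [:: a; b; c; w].
have [Aa Ab Ac Aw] : [/\ In a A, In b A, In c A & In w A].
  by split; apply: subA; rewrite /=; tauto.
have A_gt0 : (1 <= length A)%nat by case: A {nodupA subA lenA Ab Ac Aw} Aa.
case: hrank => _ [_ /(_ 4%nat A nodupA A_gt0 lenA) approxA].
have [near_ac|near_cb] := exact_rank1_interval_split hd approxA Aa Ab Ac Aw.
- by left; apply: nbhd_triangle near_ac hy.
- by right; apply: nbhd_triangle near_cb hy.
Qed.
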